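(* Let $F\subsetneq K$ be fields of characteristic $0$, with $F$ a proper nonempty subfield of $K$. Let $p(x)=\sum_{k=0}^{n}a_k x^k\in K[x]$ be non-constant with $a_n\neq 0$, and let $q(x)=\sum_{j=0}^{m}b_j x^j\in K[x]\setminus F[x]$ with $b_m\neq 0$ and $b_m\in F$. If $b_j\notin F$ for some $j\geq 1$, then $p\circ q\notin F[x]$.
   Context: $F[x]$ denotes the set of polynomials with all coefficients in $F$. *)

From HB Require Import structures.
From mathcomp Require Import all_boot all_order all_algebra.
Set Implicit Arguments. Unset Strict Implicit. Unset Printing Implicit Defensive.
Import Order.TTheory GRing.Theory Num.Theory.

From HB Require Import structures.
From mathcomp Require Import all_boot all_order all_algebra.
(* Let k >= 1 be the largest index with q_k outside F, and split q = h + e where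
   h in F[x] collects the coefficients of q above k and e has degree k with
   leading coefficient q_k.  With n = deg p and a its leading coefficient,
   a = lc(p o q) / lc(q)^n lies in F, hence so does p o q - a h^n.  Its
   leading term comes from a (q^n - h^n) = a e (q^(n-1) + ... + h^(n-1)),
   since (p - a X^n) o q has smaller degree; so it equals a n lc(q)^(n-1) q_k,
   and characteristic 0 forces q_k in F, a contradiction. *)

Set Implicit Arguments.
Unset Strict Implicit.
Unset Printing Implicit Defensive.

Import GRing.Theory.
Local Open Scope ring_scope.

Lemma size_poly_exact (R : nzSemiRingType) (p : {poly R}) N :
  p`_N != 0 -> (size p <= N.+1)%N -> size p = N.+1.
Proof.
move=> pN_nz le_pN; apply/eqP; rewrite eqn_leq le_pN ltnNge.
by apply: contra pN_nz => /leq_sizeP->.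
Qed.

Lemma size_sub_lead_coef (R : nzRingType) (p : {poly R}) :
  (size (p - lead_coef p *: 'X^((size p).-1))%R <= (size p).-1)%N.
Proof.
apply/leq_sizeP => i le_ni; rewrite coefB coefZ coefXn.
have [->|ne_in] := eqVneq i (size p).-1.
  by rewrite mulr1 lead_coefE subrr.
have lt_ni : ((size p).-1 < i)%N by rewrite ltn_neqAle eq_sym ne_in le_ni.
by rewrite mulr0 subr0 nth_default // (leq_trans (leqSpred _) lt_ni).
Qed.

Lemma size_exp_neq0 (R : idomainType) (p : {poly R}) k :
  p != 0 -> size (p ^+ k) = ((size p).-1 * k).+1.
Proof. by move=> p_nz; rewrite polySpred ?expf_neq0 // size_exp. Qed.

Section PowerDifference.

Variable R : idomainType.
Variables q h : {poly R}.
Hypothesis size_sub_lt : (size (q - h)%R < size h)%N.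

Let h_nz : h != 0.
Proof. by rewrite -size_poly_gt0 (leq_ltn_trans _ size_sub_lt). Qed.

Lemma size_eq_sub_small : size q = size h.
Proof. by rewrite -[q](subrK h) addrC size_polyDl. Qed.

Lemma lead_coef_eq_sub_small : lead_coef q = lead_coef h.
Proof. by rewrite -[q](subrK h) addrC lead_coefDl. Qed.

Let q_nz : q != 0.
Proof. by rewrite -size_poly_gt0 size_eq_sub_small size_poly_gt0. Qed.

Let geom_sum n := \sum_(i < n) q ^+ (n.-1 - i) * h ^+ i.

Lemma size_lead_coef_geom_sum n (m := (size h).-1) : n%:R != 0 :> R ->
  size (geom_sum n) = (m * n.-1).+1 /\
  lead_coef (geom_sum n) = lead_coef h ^+ n.-1 *+ n.
Proof.
move=> n_nz.
have n_gt0 : (0 < n)%N by rewrite lt0n; apply: contra n_nz => /eqP->.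
have split_n i : (i < n)%N -> (n.-1 - i + i)%N = n.-1.
  by move=> lt_in; rewrite subnK // -ltnS prednK.
have size_term (i : 'I_n) : size (q ^+ (n.-1 - i) * h ^+ i) = (m * n.-1).+1.
  rewrite size_mul ?expf_neq0 // !size_exp_neq0 // size_eq_sub_small.
  by rewrite addSn addnS /= -mulnDr split_n.
have lead_term (i : 'I_n) :
    (q ^+ (n.-1 - i) * h ^+ i)`_(m * n.-1) = lead_coef h ^+ n.-1.
  by rewrite -[X in _`_X]/((m * n.-1).+1.-1) -(size_term i) -lead_coefE
    lead_coefM !lead_coef_exp lead_coef_eq_sub_small -exprD split_n.
have top_coef : (geom_sum n)`_(m * n.-1) = lead_coef h ^+ n.-1 *+ n.
  by rewrite coef_sum (eq_bigr _ (fun i _ => lead_term i)) sumr_const card_ord.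
have size_sum_eq : size (geom_sum n) = (m * n.-1).+1.
  apply: size_poly_exact.
    by rewrite top_coef -mulr_natr mulf_neq0 ?expf_neq0 ?lead_coef_eq0.
  apply: leq_trans (size_sum _ _ _) _; apply/bigmax_leqP => i _.
  by rewrite size_term.
by rewrite lead_coefE size_sum_eq.
Qed.

Lemma size_lead_coef_subrXX n : n%:R != 0 :> R -> q != h ->
  size (q ^+ n - h ^+ n) = ((size h).-1 * n.-1 + size (q - h)%R)%N /\
  lead_coef (q ^+ n - h ^+ n) = lead_coef (q - h) * (lead_coef h ^+ n.-1 *+ n).
Proof.
move=> n_nz; rewrite -subr_eq0 => qh_nz.
have [size_S lead_S] := size_lead_coef_geom_sum n_nz.
have S_nz : geom_sum n != 0 by rewrite -size_poly_gt0 size_S.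
rewrite subrXX -/(geom_sum n) lead_coefM lead_S size_mul // size_S.
by rewrite addnS addnC.
Qed.

Lemma lead_coef_comp_sub_lead_pow (p : {poly R}) (n := (size p).-1) :
  n%:R != 0 :> R -> (1 < size (q - h)%R)%N ->
  lead_coef (p \Po q - lead_coef p *: h ^+ n) =
  lead_coef p * (lead_coef (q - h) * (lead_coef h ^+ n.-1 *+ n)).
Proof.
move=> n_nz size_qh_gt1.
have qh_neq : q != h by rewrite -subr_eq0 -size_poly_gt0 ltnW.
have [size_D lead_D] := size_lead_coef_subrXX n_nz qh_neq.
have a_nz : lead_coef p != 0.
  rewrite lead_coef_eq0 -size_poly_gt0 lt0n.
  by apply: contra n_nz => /eqP size_p0; rewrite /n size_p0.
have -> : p \Po q - lead_coef p *: h ^+ n =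
    (p - lead_coef p *: 'X^n) \Po q + lead_coef p *: (q ^+ n - h ^+ n).
  by rewrite comp_polyB comp_polyZ comp_Xn_poly scalerBr addrA subrK.
rewrite [lead_coef (_ + _ *: _)]lead_coefDr ?lead_coefZ ?lead_D //.
rewrite size_scale // size_D.
(* Degree m (n - 1) on the left against m (n - 1) + deg (q - h) on the right:
   this is where deg (q - h) >= 1 is needed. *)
apply: leq_ltn_trans (size_comp_poly_leq _ _) _.
have le_deg : ((size (p - lead_coef p *: 'X^n)%R).-1 <= n.-1)%N.
  by rewrite -!subn1 leq_sub2r ?size_sub_lead_coef.
rewrite size_eq_sub_small mulnC -addn2.
exact: leq_add (leq_mul (leqnn _) le_deg) size_qh_gt1.
Qed.

End PowerDifference.

Section PolyOverSubfield.

Variables (K : fieldType) (F : divringClosed K).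

Lemma lead_coef_polyOver_comp (p q : {poly K}) :
  (1 < size q)%N -> lead_coef q \in F -> p \Po q \is a polyOver F ->
  lead_coef p \in F.
Proof.
move=> size_q_gt1 lead_qF /polyOverP/(_ (size (p \Po q)).-1).
have lead_q_nz : lead_coef q != 0 by rewrite lead_coef_eq0 -size_poly_gt0 ltnW.
by rewrite -lead_coefE lead_coef_comp // fpredMr ?rpredX ?expf_neq0.
Qed.

Lemma exists_polyOver_high_part (q : {poly K}) :
  (exists j, (0 < j)%N /\ q`_j \notin F) -> lead_coef q \in F ->
  exists2 h, h \is a polyOver F &
    (1 < size (q - h)%R < size h)%N /\ lead_coef (q - h) \notin F.
Proof.
case=> j [j_gt0 qjNF] lead_qF.
have notF_nz x : x \notin F -> x != 0 by apply: contra => /eqP->; exact: rpred0.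
have lt_j : (j < size q)%N.
  by rewrite ltnNge; apply: contra (notF_nz _ qjNF) => /leq_sizeP->.
pose P i := (i < size q)%N && (q`_i \notin F).
have exP : exists i, P i by exists j; rewrite /P lt_j.
have ubP i : P i -> (i <= size q)%N by case/andP => /ltnW.
have [k /andP[lt_k qkNF] max_k] := ex_maxnP exP ubP.
have le_jk : (j <= k)%N by apply: max_k; rewrite /P lt_j.
have ltS_k : (k.+1 < size q)%N.
  rewrite ltn_neqAle lt_k andbT; apply: contra qkNF => /eqP size_q.
  by rewrite lead_coefE -size_q in lead_qF.
have highF i : (k < i)%N -> q`_i \in F.
  move=> lt_ki; have [lt_iq|le_qi] := ltnP i (size q).
    apply: contraT => qiNF; have := max_k i.
    by rewrite /P lt_iq qiNF leqNgt lt_ki => /(_ isT).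
  by rewrite nth_default ?rpred0.
set t := take_poly k.+1 q.
have size_t : size t = k.+1.
  apply: size_poly_exact; last exact: size_take_poly.
  by rewrite coef_take_poly ltnSn notF_nz.
exists (q - t).
  apply/polyOverP => i; rewrite coefB coef_take_poly.
  by case: ltnP => [_|le_ki]; rewrite ?subrr ?rpred0 ?subr0 ?highF.
rewrite opprB addrC subrK size_t ltnS lead_coefE size_t coef_take_poly ltnSn.
by rewrite (leq_trans j_gt0 le_jk) size_addl ?size_opp ?size_t.
Qed.

End PolyOverSubfield.

Theorem proposition11 (K : fieldType) (F : divringClosed K)
  (charK0 : [pchar K] =i pred0)
  (F_proper : exists x : K, x \notin F)
  (p q : {poly K})
  (p_nonconst : (1 < size p)%N)
  (q_notF : q \notin polyOver F)
  (q_nz : q != 0)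
  (lc_q_F : lead_coef q \in F)
  (hj : exists j : nat, (0 < j)%N /\ q`_j \notin F) :
  (p \Po q) \notin polyOver F.
Proof.
(* [F_proper], [q_notF] and [q_nz] are all consequences of [hj]. *)
apply/negP => pqF.
have [h hF [/andP[size_qh_gt1 size_qh_lt] lead_qhNF]] :=
  exists_polyOver_high_part hj lc_q_F.
set n := (size p).-1.
have n_nz : n%:R != 0 :> K.
  by rewrite (pcharf0P _).1 // -lt0n /n -subn1 subn_gt0.
have size_q_gt1 : (1 < size q)%N.
  by rewrite (size_eq_sub_small size_qh_lt) (ltn_trans size_qh_gt1).
have lead_pF := lead_coef_polyOver_comp size_q_gt1 lc_q_F pqF.
have lead_hF : lead_coef h \in F.
  by rewrite -(lead_coef_eq_sub_small size_qh_lt).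
have lead_p_nz : lead_coef p != 0 by rewrite lead_coef_eq0 -size_poly_gt0 ltnW.
have lead_h_nz : lead_coef h != 0.
  by rewrite lead_coef_eq0 -size_poly_gt0 (leq_ltn_trans _ size_qh_lt).
have : p \Po q - lead_coef p *: h ^+ n \is a polyOver F.
  by rewrite rpredB ?polyOverZ ?rpredX.
move/polyOverP/(_ (size (p \Po q - lead_coef p *: h ^+ n)).-1).
rewrite -lead_coefE lead_coef_comp_sub_lead_pow // fpredMl // fpredMr //.
- by rewrite (negbTE lead_qhNF).
- by rewrite rpredMn ?rpredX.
- by rewrite -mulr_natr mulf_neq0 ?expf_neq0.
Qed.
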